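(* Let $\bm A\in\mathbb R^{m\times n}$, let $\bm D\in\mathbb R^{n\times d}$ with $\bm D\bm D^\top=\bm I_n$, let $0<\alpha\le1$, $\lambda>0$, and let $\bm b=\bm A\bm x+\bm e$ with $\bm x\in\mathbb R^n$ and $\|\bm e\|_2\le\lambda$. Let $t$ be a positive integer and let $T\subseteq\{1,\dots,d\}$ be an index set of $t$ largest-magnitude entries of $\bm D^\top\bm x$. Let $\hat{\bm x}$ be a minimizer of $$\min_{\bm x\in\mathbb R^n}\ \lambda\big(\|\bm D^\top\bm x\|_1-\alpha\|\bm D^\top\bm x\|_2\big)+\tfrac12\|\bm A\bm x-\bm b\|_2^2,$$ and set $\bm h=\hat{\bm x}-\bm x$. Then $$\|\bm A\bm h\|_2^2+2\lambda\|\bm D_{T^c}^\top\bm h\|_1\le2\lambda\big(\|\bm D_T^\top\bm h\|_1+\alpha\|\bm D^\top\bm h\|_2+2\|\bm D_{T^c}^\top\bm x\|_1+\|\bm A\bm h\|_2\big),$$ $$\|\bm A\bm h\|_2^2+2\lambda\big(\|\bm D_{T^c}^\top\bm h\|_1-\alpha\|\bm D_{T^c}^\top\bm h\|_2\big)\le2\lambda\big(\|\bm D_T^\top\bm h\|_1+2\|\bm D_{T^c}^\top\bm x\|_1+\alpha\|\bm D_T^\top\bm h\|_2+\|\bm A\bm h\|_2\big),$$ $$\|\bm D_{T^c}^\top\bm h\|_1\le\|\bm D_T^\top\bm h\|_1+2\|\bm D_{T^c}^\top\bm x\|_1+\alpha\|\bm D^\top\bm h\|_2+\|\bm A\bm h\|_2,$$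 and $$\|\bm A\bm h\|_2^2\le2\lambda\big(\|\bm D_T^\top\bm h\|_1+2\|\bm D_{T^c}^\top\bm x\|_1+\alpha\|\bm D^\top\bm h\|_2+\|\bm A\bm h\|_2\big).$$
   Context: For an index set $S\subseteq\{1,\dots,d\}$, $S^c$ is its complement in $\{1,\dots,d\}$ and $\bm D_S$ denotes the matrix $\bm D$ with all columns not indexed by $S$ set to zero; thus $\bm D_S^\top\bm h$ is the vector $\bm D^\top\bm h$ with the entries outside $S$ set to zero. *)

From HB Require Import structures.
From mathcomp Require Import all_boot all_order all_algebra.
From mathcomp Require Import reals.
Set Implicit Arguments. Unset Strict Implicit. Unset Printing Implicit Defensive.
Import Order.TTheory GRing.Theory Num.Theory.
Local Open Scope ring_scope.

Definition norm1 (R : realType) (k : nat) (v : 'cV[R]_k) : R :=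
  \sum_(i < k) `|v i 0|.

Definition norm2 (R : realType) (k : nat) (v : 'cV[R]_k) : R :=
  Num.sqrt (\sum_(i < k) (v i 0) ^+ 2).

(* restrict S v : entries of v outside S set to zero; so
   restrict S (D^T *m h) = D_S^T h. *)
Definition restrict (R : realType) (k : nat) (S : {set 'I_k}) (v : 'cV[R]_k)
  : 'cV[R]_k := \col_i (if i \in S then v i 0 else 0).

Definition objective (R : realType) (m n d : nat) (A : 'M[R]_(m, n))
  (D : 'M[R]_(n, d)) (alpha lambda : R) (b : 'cV[R]_m) (z : 'cV[R]_n) : R :=
  lambda * (norm1 (D^T *m z) - alpha * norm2 (D^T *m z))
  + 2^-1 * (norm2 (A *m z - b)) ^+ 2.

Definition largest_entries (R : realType) (k : nat) (t : nat)
  (T : {set 'I_k}) (v : 'cV[R]_k) : Prop :=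
  #|T| = t /\ forall i j, i \in T -> j \notin T -> `|v j 0| <= `|v i 0|.

From HB Require Import structures.
From mathcomp Require Import all_boot all_order all_algebra.
From mathcomp Require Import reals ring lra.
Set Implicit Arguments. Unset Strict Implicit. Unset Printing Implicit Defensive.
Import Order.TTheory GRing.Theory Num.Theory.
Local Open Scope ring_scope.

(* Compare the objective at xhat = x + h with its value at x.  Expanding
   ||A h - e||^2 leaves 1/2 ||A h||^2 <= <A h, e> + lambda (||D^T x||_1 -
   ||D^T x + D^T h||_1) + lambda alpha (||D^T x + D^T h||_2 - ||D^T x||_2).
   The inner product is at most lambda ||A h|| by Cauchy-Schwarz, the l2 gap is
   at most ||D^T h||_2 by the triangle inequality, and the l1 gap is at most
   ||D_T^T h||_1 + 2 ||D_{T^c}^T x||_1 - ||D_{T^c}^T h||_1 entrywise.  All four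
   claims are rearrangements of the resulting inequality; neither D D^T = I nor
   the choice of T as the largest entries is needed. *)

Lemma lagrange_identity (R : comPzRingType) (k : nat) (u v : 'I_k -> R) :
  \sum_i \sum_j (u i * v j - u j * v i) ^+ 2
    = 2 * ((\sum_i u i ^+ 2) * (\sum_j v j ^+ 2)
           - (\sum_i u i * v i) * (\sum_j u j * v j)).
Proof.
pose c i j := u i ^+ 2 * v j ^+ 2 - u i * v i * (u j * v j).
have -> : \sum_i \sum_j (u i * v j - u j * v i) ^+ 2
          = \sum_i \sum_j c i j + \sum_i \sum_j c j i.
  rewrite -big_split; apply: eq_bigr => i _.
  by rewrite -big_split; apply: eq_bigr => j _; rewrite /c /=; ring.
rewrite [X in _ + X]exchange_big -mulr2n mulr_natl !mulr_suml -sumrB.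
by congr (_ *+ 2); apply: eq_bigr => i _; rewrite !mulr_sumr -sumrB.
Qed.

Section Norms.
Variables (R : realType) (k : nat).
Implicit Types (u v : 'cV[R]_k) (T : {set 'I_k}).

Lemma norm1_ge0 u : 0 <= norm1 u.
Proof. exact: sumr_ge0. Qed.

Lemma norm2_ge0 u : 0 <= norm2 u.
Proof. exact: sqrtr_ge0. Qed.

Lemma sqr_norm2 u : norm2 u ^+ 2 = \sum_i u i 0 ^+ 2.
Proof. by rewrite sqr_sqrtr //; apply: sumr_ge0 => i _; exact: sqr_ge0. Qed.

Lemma norm2N u : norm2 (- u) = norm2 u.
Proof. by congr Num.sqrt; apply: eq_bigr => i _; rewrite mxE sqrrN. Qed.

Lemma sqr_norm2B u v :
  norm2 (u - v) ^+ 2 = norm2 u ^+ 2 - 2 * \sum_i u i 0 * v i 0 + norm2 v ^+ 2.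
Proof.
rewrite !sqr_norm2 mulr_sumr -sumrB -big_split /=.
by apply: eq_bigr => i _; rewrite !mxE; ring.
Qed.

Lemma sqr_dot_le u v :
  (\sum_i u i 0 * v i 0) ^+ 2 <= norm2 u ^+ 2 * norm2 v ^+ 2.
Proof.
rewrite !sqr_norm2 expr2 -subr_ge0 -(pmulr_rge0 _ (ltr0n R 2)).
rewrite -(lagrange_identity (fun i => u i 0) (fun i => v i 0)).
by apply: sumr_ge0 => i _; apply: sumr_ge0 => j _; exact: sqr_ge0.
Qed.

Lemma dot_le_norm2 u v : \sum_i u i 0 * v i 0 <= norm2 u * norm2 v.
Proof.
apply: le_trans (ler_norm _) _.
rewrite -ler_sqr ?nnegrE ?mulr_ge0 ?norm2_ge0 // real_normK ?num_real //.
by rewrite exprMn sqr_dot_le.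
Qed.

Lemma norm2D u v : norm2 (u + v) <= norm2 u + norm2 v.
Proof.
rewrite -ler_sqr ?nnegrE ?addr_ge0 ?norm2_ge0 //.
rewrite -[v]opprK sqr_norm2B norm2N opprK sqrrD.
have := dot_le_norm2 u v.
have -> : \sum_i u i 0 * (- v) i 0 = - \sum_i u i 0 * v i 0.
  by rewrite -sumrN; apply: eq_bigr => i _; rewrite mxE mulrN.
lra.
Qed.

Lemma restrict_splitC T v : v = restrict T v + restrict (~: T) v.
Proof.
apply/matrixP => i j; rewrite !mxE inE (ord1 j).
by case: (i \in T); rewrite ?addr0 ?add0r.
Qed.

Lemma norm1_gapD T u v :
  norm1 u - norm1 (u + v) <=
  norm1 (restrict T v) + 2 * norm1 (restrict (~: T) u) - norm1 (restrict (~: T) v).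
Proof.
rewrite /norm1 mulr_sumr -!sumrB -big_split -sumrB /=.
apply: ler_sum => i _; rewrite !mxE inE.
have le_v := ler_normD (u i 0 + v i 0) (- u i 0).
have le_u := ler_normD (u i 0 + v i 0) (- v i 0).
rewrite normrN addrAC subrr add0r in le_v; rewrite normrN addrK in le_u.
by case: (i \in T); rewrite /= ?normr0; lra.
Qed.

End Norms.

Lemma objective_descent (R : realType) (m n d : nat) (A : 'M[R]_(m, n))
  (D : 'M[R]_(n, d)) (alpha lambda : R) (x h : 'cV[R]_n) (e : 'cV[R]_m)
  (T : {set 'I_d}) :
  0 <= alpha -> 0 <= lambda -> norm2 e <= lambda ->
  objective A D alpha lambda (A *m x + e) (x + h)
    <= objective A D alpha lambda (A *m x + e) x ->
  norm2 (A *m h) ^+ 2 <= 2 * lambda *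
    (norm1 (restrict T (D^T *m h)) + 2 * norm1 (restrict (~: T) (D^T *m x))
     - norm1 (restrict (~: T) (D^T *m h)) + alpha * norm2 (D^T *m h)
     + norm2 (A *m h)).
Proof.
move=> alpha_ge0 lambda_ge0 le_e_lambda.
have res_x : A *m x - (A *m x + e) = - e by rewrite opprD addNKr.
have res_xh : A *m (x + h) - (A *m x + e) = A *m h - e.
  by rewrite mulmxDr opprD addrACA subrr add0r.
rewrite /objective res_x res_xh mulmxDr norm2N sqr_norm2B.
have dot_le := dot_le_norm2 (A *m h) e.
have dot_le_lambda : norm2 (A *m h) * norm2 e <= norm2 (A *m h) * lambda.
  by rewrite ler_wpM2l ?norm2_ge0.
have l1_gap := ler_wpM2l lambda_ge0 (norm1_gapD T (D^T *m x) (D^T *m h)).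
have l2_gap := ler_wpM2l (mulr_ge0 lambda_ge0 alpha_ge0)
                         (norm2D (D^T *m x) (D^T *m h)).
lra.
Qed.

Theorem lemma2 (R : realType) (m n d : nat) (A : 'M[R]_(m, n))
  (D : 'M[R]_(n, d)) (alpha lambda : R) (x : 'cV[R]_n) (e b : 'cV[R]_m)
  (t : nat) (T : {set 'I_d}) (xhat : 'cV[R]_n) :
  D *m D^T = 1%:M ->
  0 < alpha -> alpha <= 1 -> 0 < lambda ->
  b = A *m x + e -> norm2 e <= lambda ->
  (0 < t)%N -> largest_entries t T (D^T *m x) ->
  (forall z : 'cV[R]_n, objective A D alpha lambda b xhat
                         <= objective A D alpha lambda b z) ->
  let h := xhat - x in
  let DTh := norm1 (restrict T (D^T *m h)) in
  let DTch := norm1 (restrict (~: T) (D^T *m h)) in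
  let DTcx := norm1 (restrict (~: T) (D^T *m x)) in
  let Ah := norm2 (A *m h) in
  [/\ Ah ^+ 2 + 2 * lambda * DTch
        <= 2 * lambda * (DTh + alpha * norm2 (D^T *m h) + 2 * DTcx + Ah),
      Ah ^+ 2 + 2 * lambda * (DTch - alpha * norm2 (restrict (~: T) (D^T *m h)))
        <= 2 * lambda * (DTh + 2 * DTcx + alpha * norm2 (restrict T (D^T *m h)) + Ah),
      DTch <= DTh + 2 * DTcx + alpha * norm2 (D^T *m h) + Ah &
      Ah ^+ 2 <= 2 * lambda * (DTh + 2 * DTcx + alpha * norm2 (D^T *m h) + Ah)].
Proof.
move=> _ alpha_gt0 _ lambda_gt0 -> le_e_lambda _ _ xhat_opt h DTh DTch DTcx Ah.
have descent : Ah ^+ 2 <= 2 * lambda *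
    (DTh + 2 * DTcx - DTch + alpha * norm2 (D^T *m h) + Ah).
  apply: objective_descent (ltW alpha_gt0) (ltW lambda_gt0) le_e_lambda _.
  by rewrite /h subrKC.
have lambda_DTch_ge0 : 0 <= lambda * DTch := mulr_ge0 (ltW lambda_gt0) (norm1_ge0 _).
have split_h := norm2D (restrict T (D^T *m h)) (restrict (~: T) (D^T *m h)).
rewrite -restrict_splitC in split_h.
have lambda_split := ler_wpM2l (mulr_ge0 (ltW lambda_gt0) (ltW alpha_gt0)) split_h.
split; try lra.
by rewrite -(ler_pM2l lambda_gt0); have := sqr_ge0 Ah; lra.
Qed.
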